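(* Let $(\mathbb T,o)\in\mathcal T$ and consider the TASEP on $\mathbb T$ started from the all-empty configuration, where $n$ particles are generated at the root according to an arbitrary rule. Assume (UE) holds with some $\varepsilon>0$. Then for all $m\in\mathbb N$, $$P_{\mathbb T}\big(z^m_i\ne z^m_j\ \text{for all }i,j\in\{1,\dots,n\},\,i\ne j\big)\ge1-n^2\Big(\frac1{1+\varepsilon}\Big)^{F_n(m)},$$ where $$F_n(m):=\begin{cases}\min\{F(o,x):x\in\mathcal Z_m\}-n,& d_{\mathbb T}=1,\\ m-\lceil n(d_{\mathbb T}-1)^{-1}\rceil,& d_{\mathbb T}\ge2.\end{cases}$$
   Context: $\mathcal T$: infinite, locally finite rooted trees $\mathbb T=(V,E,o)$ with edges directed from parent to child; $\mathcal Z_m$ the $m$-th generation. TASEP: a particle at $x$ jumps to a child $y$ at rate $r_{x,y}$ if $y$ is empty (positive, uniformly bounded rates); $P_{\mathbb T}$ its law. (UE): $r_{x,y}/r_{x,z}\ge\varepsilon$ for all $(x,y),(x,z)\in E$, some $\varepsilon\in(0,1]$. $z^m_i\in\mathcal Z_m$ is the unique site of generation $m$ visited by the $i$-th particle to enter the tree. $[o,x]$ is the set of vertices on the path from $o$ to $x$; $F(o,x):=|\{z\in[o,x]\setminus\{x\}:\deg(z)\ge3\}|$, where $\deg$ is the degree in the (undirected) tree. $d_{\mathbb T}$ is the smallest number of children of a vertex of $\mathbb T$. *)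

From HB Require Import structures.
From mathcomp Require Import all_boot all_order all_algebra.
From mathcomp Require Import reals.
Set Implicit Arguments.
Unset Strict Implicit.
Unset Printing Implicit Defensive.
Import Order.TTheory GRing.Theory Num.Theory.

(** * Trees (Ulam--Harris encoding)
   A locally finite rooted tree is encoded by a child-count function
   [c : seq nat -> nat].  Vertices are the words [w = [:: k1; ...; km]] with
   [k_(i+1) < c (take i w)]; the root [o] is [[::]]; the children of [w] are
   [rcons w k] for [k < c w] (edges directed parent -> child); the generation
   of [w] is [size w]; the path [o, x] consists of the prefixes [take i x],
   [i <= size x]. *)

Definition vertex (c : seq nat -> nat) (w : seq nat) : bool :=
  all (fun i => nth 0 w i < c (take i w)) (iota 0 (size w)).

Fixpoint gen (c : seq nat -> nat) (m : nat) : seq (seq nat) :=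
  if m is m'.+1 then
    flatten [seq [seq rcons w k | k <- iota 0 (c w)] | w <- gen c m']
  else [:: [::]].

(** Degree in the undirected tree: children plus the parent edge (if not root). *)
Definition deg (c : seq nat -> nat) (z : seq nat) : nat :=
  c z + (z != [::]).

(** F(o,x) = #{ z in [o,x] \ {x} : deg z >= 3 }. *)
Definition Fox (c : seq nat -> nat) (x : seq nat) : nat :=
  count (fun i => 3 <= deg c (take i x)) (iota 0 (size x)).

Definition minF (c : seq nat -> nat) (m : nat) : nat :=
  \big[minn/Fox c (head [::] (gen c m))]_(x <- gen c m) Fox c x.

Definition min_children (c : seq nat -> nat) (d : nat) : Prop :=
  (exists w, vertex c w /\ c w = d) /\ (forall w, vertex c w -> d <= c w).

Definition ceil_div (a b : nat) : nat := (a + b.-1) %/ b.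

(** F_n(m) (an integer, possibly negative). *)
Definition Fn (c : seq nat -> nat) (d n m : nat) : int :=
  if d == 1 then (Posz (minF c m) - Posz n)%R
  else (Posz m - Posz (ceil_div n d.-1))%R.

(** * The TASEP jump chain with an arbitrary insertion rule
   A state is the sequence of the positions of the particles that have
   entered so far, the i-th entry being the position of the i-th particle to
   enter.  A history is the sequence of states visited so far (the last one
   being the current state).  The insertion rule is a (history dependent,
   possibly randomised) policy [pol : history -> R], the conditional
   probability that the next event is the insertion of a particle at the
   root; it is only used when insertion is possible (root empty and fewer
   than [n] particles inserted).  Otherwise the next event is a TASEP jump of
   a particle from [x] to an empty child [y], chosen with probability
   proportional to [r x y]. *)

Section Chain.
Local Open Scope ring_scope.
Variable R : realType.
Variables (c : seq nat -> nat) (r : seq nat -> nat -> R) (n : nat)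
  (pol : seq (seq (seq nat)) -> R).

Definition state := seq (seq nat).

Definition moves (s : state) : seq (R * state) :=
  flatten [seq
    [seq (r (nth [::] s i) k, set_nth [::] s i (rcons (nth [::] s i) k))
       | k <- iota 0 (c (nth [::] s i)) & rcons (nth [::] s i) k \notin s]
    | i <- iota 0 (size s)].

Definition can_insert (s : state) : bool := ((size s < n)%N) && ([::] \notin s).

Definition succs (h : seq state) : seq (R * state) :=
  let s := last [::] h in
  let pins := if can_insert s then pol h else 0 in
  let mv := moves s in
  let lam := \sum_(e <- mv) e.1 in
  (pins, rcons s [::]) ::
  (if lam == 0 then [:: (1 - pins, s)]
   else [seq ((1 - pins) * e.1 / lam, e.2) | e <- mv]).

Fixpoint prob (N : nat) (h : seq state) (E : state -> bool) : R :=
  if N is N'.+1 then \sum_(e <- succs h) e.1 * prob N' (rcons h e.2) E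
  else (E (last [::] h))%:R.

End Chain.

(** The generation-m sites z^m_i of all particles having reached generation m
    are pairwise distinct. *)
Definition distinct_at (m : nat) (s : seq (seq nat)) : bool :=
  all (fun i => all (fun j =>
        (i != j) ==> (m <= size (nth [::] s i)) ==> (m <= size (nth [::] s j)) ==>
        (take m (nth [::] s i) != take m (nth [::] s j)))
      (iota 0 (size s))) (iota 0 (size s)).

From HB Require Import structures.
From mathcomp Require Import all_boot all_order all_algebra ring.
From mathcomp Require Import reals zify.
Set Implicit Arguments.
Unset Strict Implicit.
Unset Printing Implicit Defensive.
Import Order.TTheory GRing.Theory Num.Theory.

(* Union bound over the pairs i < j of particles.  Particles never overtake
   each other, so particle j can only reach the generation-m ancestor of
   particle i by following i's path.  At each branch point of that path either
   another child of j's position is free, and by (UE) the jump leaving i's path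
   is at least eps times as likely as the one following it, or all other
   children are occupied, which uses up at least D of the at most j particles
   ahead of j (D = d_T - 1, or D = 1 when d_T = 1).  Hence
   (1 + eps) ^ (#particles ahead %/ D - #branch points left) is an excessive
   function of the chain, and a collision of i and j has probability at most
   (1 + eps) ^ (j %/ D - G), where G is m for d_T >= 2 and min F(o,x) for
   d_T = 1. *)

Section Prefix.
Variable T : eqType.
Implicit Types (x y z p w : seq T).

Lemma prefix_total x y w : prefix x w -> prefix y w -> prefix x y || prefix y x.
Proof.
rewrite !prefixE => /eqP hx /eqP hy.
case: (leqP (size x) (size y)) => h; apply/orP; [left | right]; apply/eqP.
  by rewrite -[in RHS]hx -[y in take _ y]hy take_takel.
by rewrite -[in RHS]hy -[x in take _ x]hx take_takel // (ltnW h).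
Qed.

Lemma prefix_rcons_inv z w k : prefix z (rcons w k) -> prefix z w || (z == rcons w k).
Proof.
rewrite !prefixE => /eqP h; apply/orP.
case: (ltnP (size z) (size w).+1) => hs.
  by left; apply/eqP; rewrite -[in RHS]h -cats1 takel_cat.
by right; apply/eqP; rewrite -[in LHS]h take_oversize // size_rcons.
Qed.

Lemma take_prefix z w m : prefix z w -> m <= size z -> take m w = take m z.
Proof. by rewrite prefixE => /eqP h hm; rewrite -[in RHS]h take_takel. Qed.

Lemma prefix_take_leq z w m : prefix z w -> size z <= m -> prefix z (take m w).
Proof. by rewrite !prefixE => /eqP h hm; apply/eqP; rewrite take_takel. Qed.

Lemma prefix_rcons_nth (x0 : T) z p k : prefix z p -> size z < size p ->
  prefix (rcons z k) p = (k == nth x0 p (size z)).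
Proof.
rewrite !prefixE size_rcons => /eqP h hs.
rewrite (take_nth x0 hs) h.
by apply/eqP/eqP => [/rcons_inj [] ->|->].
Qed.

Lemma prefix_size_lt z p : prefix z p -> z != p -> size z < size p.
Proof.
move=> hp hne; rewrite ltn_neqAle size_prefix // andbT.
apply: contra hne => /eqP e; move: hp; rewrite prefixE e take_size.
by rewrite eq_sym.
Qed.

Definition sprefix z w := prefix z w && (z != w).

Lemma sprefix_rcons z w k : sprefix (rcons z k) w -> sprefix z w.
Proof.
case/andP => h1 _; apply/andP; split; first exact: prefix_trans (prefix_rcons z k) h1.
by apply/eqP => e; move: (size_prefix h1); rewrite -e size_rcons ltnn.
Qed.

Lemma sprefix_nil z : sprefix z [::] = false.
Proof. by rewrite /sprefix prefixs0; case: eqP. Qed.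

End Prefix.


Section Tree.
Variable c : seq nat -> nat.

Lemma vertexP w : reflect (forall i, i < size w -> nth 0 w i < c (take i w)) (vertex c w).
Proof.
apply: (iffP allP) => H i; first by move=> hi; apply: H; rewrite mem_iota.
by rewrite mem_iota => /andP[_ hi]; apply: H.
Qed.

Lemma vertex_rcons w k : vertex c (rcons w k) = vertex c w && (k < c w).
Proof.
apply/idP/andP => [/vertexP H|[/vertexP hw hk]].
  split; last first.
    have := H (size w); rewrite size_rcons ltnSn nth_rcons ltnn eqxx -cats1.
    by rewrite take_size_cat //; move/(_ isT).
  apply/vertexP => i hi; have := H i.
  rewrite size_rcons nth_rcons hi -cats1 takel_cat; last exact: ltnW.
  by move/(_ (ltnW hi)).
apply/vertexP => i; rewrite size_rcons ltnS leq_eqVlt nth_rcons -cats1.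
case/orP => [/eqP ->|hi]; first by rewrite ltnn eqxx take_size_cat.
by rewrite hi takel_cat; [apply: hw | apply: ltnW].
Qed.

Lemma gen_size m x : x \in gen c m -> size x = m.
Proof.
elim: m x => [|m IH] x /=; first by rewrite inE => /eqP ->.
case/flattenP => L /mapP[w hw ->] /mapP[k _ ->].
by rewrite size_rcons (IH _ hw).
Qed.

Lemma mem_gen w : vertex c w -> w \in gen c (size w).
Proof.
elim/last_ind: w => [|w k IH]; first by rewrite /= inE.
rewrite vertex_rcons => /andP[hw hk]; rewrite size_rcons /=; apply/flattenP.
exists [seq rcons w k0 | k0 <- iota 0 (c w)]; first by apply/mapP; exists w => //; apply: IH.
by apply/mapP; exists k => //; rewrite mem_iota add0n.
Qed.

End Tree.

Definition jump (s : state) (a k : nat) : state :=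
  set_nth [::] s a (rcons (nth [::] s a) k).

Lemma size_jump s a k : a < size s -> size (jump s a k) = size s.
Proof. by move=> ha; rewrite size_set_nth; apply/maxn_idPr. Qed.

Lemma nth_jump s a k b :
  nth [::] (jump s a k) b = if b == a then rcons (nth [::] s a) k else nth [::] s b.
Proof. by rewrite nth_set_nth. Qed.

Lemma prefix_nth_jump s a k b : prefix (nth [::] s b) (nth [::] (jump s a k) b).
Proof. by rewrite nth_jump; case: eqP => [->|_]; [apply: prefix_rcons | apply: prefix_refl]. Qed.

Section Admissible.
Variables (c : seq nat -> nat) (n : nat).

(* Particles enter at the root and only jump to empty children, so no
   particle can ever be a descendant of a particle that entered before it. *)
Definition no_overtaking (s : state) :=
  forall a b, a < b < size s -> ~~ prefix (nth [::] s a) (nth [::] s b).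

Definition admissible (s : state) : Prop :=
  [/\ size s <= n, all (vertex c) s, uniq s & no_overtaking s].

Lemma admissible_nil : admissible [::].
Proof. by split => // a b; rewrite ltn0 andbF. Qed.

Lemma admissible_insert s : admissible s -> can_insert n s -> admissible (rcons s [::]).
Proof.
case=> hn hv hu ho /andP[hsn h0]; split.
- by rewrite size_rcons.
- by rewrite all_rcons hv andbT.
- by rewrite rcons_uniq h0.
move=> a b; rewrite size_rcons ltnS => /andP[hab hb].
have ha : a < size s by apply: leq_trans hb.
rewrite !nth_rcons ha; move: hb; rewrite leq_eqVlt => /orP[/eqP ->|hb].
  rewrite ltnn eqxx prefixs0; apply: contra h0 => /eqP <-.
  exact: mem_nth.
by rewrite hb; apply: ho; rewrite hab hb.
Qed.

Lemma vertex_nth s a : admissible s -> a < size s -> vertex c (nth [::] s a).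
Proof. by case=> _ hv _ _ ha; apply: (allP hv); apply: mem_nth. Qed.

Lemma admissible_jump s a k : admissible s -> a < size s ->
  k < c (nth [::] s a) -> rcons (nth [::] s a) k \notin s -> admissible (jump s a k).
Proof.
move=> hI ha hk hnot; case: (hI) => hn hv hu ho.
have hsz := size_jump k ha.
split; first by rewrite hsz.
- apply/(all_nthP [::]) => b; rewrite hsz nth_jump => hb.
  case: eqP => _; last exact: vertex_nth.
  by rewrite vertex_rcons vertex_nth.
- apply/(uniqP [::]) => b b'; rewrite !inE hsz => hb hb'; rewrite !nth_jump.
  case: eqP => [->|hba]; case: eqP => [->|hb'a] // e.
  + by case/negP: hnot; rewrite e mem_nth.
  + by case/negP: hnot; rewrite -e mem_nth.
  + exact: (uniqP [::] hu).
move=> b b'; rewrite hsz => /andP[hbb' hb'].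
have hb : b < size s by apply: ltn_trans hb'.
rewrite !nth_jump; case: eqP => [eb|hba]; case: eqP => [eb'|hb'a].
- by move: hbb'; rewrite eb eb' ltnn.
- apply: contra (ho b b' _) => [hp|]; last by rewrite hbb'.
  by rewrite eb; apply: prefix_trans hp; apply: prefix_rcons.
- apply/negP => /prefix_rcons_inv /orP[hp|/eqP e].
    have hba' : b < a < size s by rewrite -eb' hbb' hb'.
    by move: (ho _ _ hba'); rewrite hp.
  by move: hnot; rewrite -e mem_nth.
- by apply: ho; rewrite hbb' hb'.
Qed.

End Admissible.

Lemma ler_sum_seq (R : numDomainType) (I : eqType) (L : seq I) (P : pred I) (F G : I -> R) :
  (forall i, i \in L -> P i -> (F i <= G i)%R) ->
  (\sum_(i <- L | P i) F i <= \sum_(i <- L | P i) G i)%R.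
Proof.
move=> H; rewrite big_seq_cond [X in (_ <= X)%R]big_seq_cond.
by apply: ler_sum => i /andP[]; apply: H.
Qed.

Section ChainBounds.
Local Open Scope ring_scope.
Variables (R : realType) (c : seq nat -> nat) (r : seq nat -> nat -> R) (n : nat)
  (pol : seq state -> R).
Hypothesis r_gt0 : forall w k, vertex c w -> (k < c w)%N -> 0 < r w k.
Hypothesis pol_prob : forall h, 0 <= pol h <= 1.

Definition jump_sum (F : state -> R) (s : state) : R :=
  \sum_(a <- iota 0 (size s))
    \sum_(k <- iota 0 (c (nth [::] s a)) | rcons (nth [::] s a) k \notin s)
      r (nth [::] s a) k * F (jump s a k).

Definition insert_prob (h : seq state) : R :=
  if can_insert n (last [::] h) then pol h else 0.

Lemma sum_moves_rate s : \sum_(e <- moves c r s) e.1 = jump_sum (fun=> 1) s.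
Proof.
rewrite /moves big_flatten big_map; apply: eq_bigr => a _.
by rewrite big_map big_filter; apply: eq_bigr => k _; rewrite mulr1.
Qed.

Lemma sum_succsE h (F : state -> R) :
  \sum_(e <- succs c r n pol h) e.1 * F e.2 =
  insert_prob h * F (rcons (last [::] h) [::]) +
  (if jump_sum (fun=> 1) (last [::] h) == 0 then (1 - insert_prob h) * F (last [::] h)
   else (1 - insert_prob h) / jump_sum (fun=> 1) (last [::] h) * jump_sum F (last [::] h)).
Proof.
rewrite /succs big_cons /= sum_moves_rate -/(insert_prob _).
case: ifP => _; first by rewrite big_seq1.
rewrite big_map /moves big_flatten big_map /jump_sum mulr_sumr; congr (_ + _).
apply: eq_bigr => a _; rewrite big_map big_filter mulr_sumr.
by apply: eq_bigr => k _ /=; ring.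
Qed.

Lemma insert_prob_ge0_le1 h : 0 <= insert_prob h <= 1.
Proof. by rewrite /insert_prob; case: ifP => _ //; rewrite lexx ler01. Qed.

Lemma insert_prob_can_insert h : insert_prob h != 0 -> can_insert n (last [::] h).
Proof. by rewrite /insert_prob; case: ifP => //; rewrite eqxx. Qed.

Lemma jump_rate_gt0 s a k : admissible c n s -> a \in iota 0 (size s) ->
  k \in iota 0 (c (nth [::] s a)) -> 0 < r (nth [::] s a) k.
Proof.
rewrite !mem_iota !add0n => hI /andP[_ ha] /andP[_ hk].
exact: r_gt0 (vertex_nth hI ha) hk.
Qed.

Lemma ler_jump_sum s F1 F2 : admissible c n s ->
  (forall s', admissible c n s' -> F1 s' <= F2 s') -> jump_sum F1 s <= jump_sum F2 s.
Proof.
move=> hI H; apply: ler_sum_seq => a ha _; apply: ler_sum_seq => k hk hnot.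
apply: ler_wpM2l; first exact/ltW/jump_rate_gt0.
apply: H; apply: admissible_jump => //.
- by move: ha; rewrite mem_iota.
- by move: hk; rewrite mem_iota.
Qed.

Lemma jump_sum_ge0 s : admissible c n s -> 0 <= jump_sum (fun=> 1) s.
Proof.
move=> hI; rewrite /jump_sum big_seq; apply: sumr_ge0 => a ha.
rewrite big_seq_cond; apply: sumr_ge0 => k /andP[hk _].
by rewrite mulr1; apply/ltW/jump_rate_gt0.
Qed.

Lemma ler_sum_succs h F1 F2 : admissible c n (last [::] h) ->
  (forall s', admissible c n s' -> F1 s' <= F2 s') ->
  \sum_(e <- succs c r n pol h) e.1 * F1 e.2 <= \sum_(e <- succs c r n pol h) e.1 * F2 e.2.
Proof.
move=> hI H; rewrite !sum_succsE.
have /andP[p0 p1] := insert_prob_ge0_le1 h.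
apply: lerD.
  have [->|hp] := eqVneq (insert_prob h) 0; first by rewrite !mul0r.
  by apply: ler_wpM2l => //; apply/H/admissible_insert/insert_prob_can_insert.
case: ifP => _; first by apply: ler_wpM2l; [rewrite subr_ge0|apply: H].
apply: ler_wpM2l; last exact: ler_jump_sum.
by apply: divr_ge0; [rewrite subr_ge0|apply: jump_sum_ge0].
Qed.

Lemma sum_succs1 h : admissible c n (last [::] h) ->
  \sum_(e <- succs c r n pol h) e.1 * 1 = 1.
Proof.
move=> hI; rewrite (sum_succsE h (fun=> 1)).
case: ifP => hl; first by rewrite !mulr1 addrC subrK.
by rewrite mulr1 -mulrA mulVf ?hl // mulr1 addrC subrK.
Qed.

Lemma prob_pred0 N h (E : pred state) : E =1 pred0 -> prob c r n pol N h E = 0.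
Proof.
move=> hE; elim: N h => [|N IH] h /=; first by rewrite hE.
by rewrite big1 // => e _; rewrite IH mulr0.
Qed.

Lemma prob_le_excessive (Phi : state -> R) (E : pred state) :
  (forall s, admissible c n s -> (E s)%:R <= Phi s) ->
  (forall h, admissible c n (last [::] h) ->
     \sum_(e <- succs c r n pol h) e.1 * Phi e.2 <= Phi (last [::] h)) ->
  forall N h, admissible c n (last [::] h) -> prob c r n pol N h E <= Phi (last [::] h).
Proof.
move=> hE hPhi; elim=> [|N IH] h hI /=; first exact: hE.
apply: le_trans (hPhi h hI).
apply: (@ler_sum_succs h (fun s' => prob c r n pol N (rcons h s') E)) => // s' hs'.
by have := IH (rcons h s'); rewrite last_rcons; apply.
Qed.

Lemma prob_union_bound (I : finType) (E : pred state) (B : I -> pred state) :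
  (forall s, admissible c n s -> 1 - (E s)%:R <= \sum_i (B i s)%:R :> R) ->
  forall N h, admissible c n (last [::] h) ->
  1 - prob c r n pol N h E <= \sum_i prob c r n pol N h (B i).
Proof.
move=> hEB; elim=> [|N IH] h hI /=; first exact: hEB.
rewrite -{1}(sum_succs1 hI) -sumrB.
rewrite (eq_bigr (fun e => e.1 * (1 - prob c r n pol N (rcons h e.2) E))); last first.
  by move=> e _; rewrite mulrBr.
apply: le_trans.
  apply: (@ler_sum_succs h (fun s' => 1 - prob c r n pol N (rcons h s') E)
     (fun s' => \sum_i prob c r n pol N (rcons h s') (B i))) => // s' hs'.
  by apply: IH; rewrite last_rcons.
rewrite le_eqVlt; apply/orP; left; apply/eqP.
rewrite (eq_bigr (fun e => \sum_i e.1 * prob c r n pol N (rcons h e.2) (B i))).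
  exact: exchange_big.
by move=> e _; rewrite mulr_sumr.
Qed.

End ChainBounds.

Definition below (z : seq nat) (s : state) : nat := count (sprefix z) s.

Lemma below_rcons z k s : below (rcons z k) s <= below z s.
Proof. by apply: sub_count => w; apply: sprefix_rcons. Qed.

Lemma below_jump z s a k : a < size s ->
  (sprefix z (rcons (nth [::] s a) k) -> sprefix z (nth [::] s a)) ->
  below z (jump s a k) <= below z s.
Proof.
move=> ha hz; rewrite /below count_set_nth_ltn //.
case: (boolP (sprefix z (rcons _ k))) => [/hz ->|_]; first by rewrite addnK.
by rewrite addn0 leq_subr.
Qed.

Lemma below_insert z s : below z (rcons s [::]) = below z s.
Proof. by rewrite /below -cats1 count_cat /= sprefix_nil !addn0. Qed.

Lemma below_siblings s z kp cz : kp < cz ->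
  (forall k, k < cz -> k != kp -> rcons z k \in s) ->
  below (rcons z kp) s + cz.-1 <= below z s.
Proof.
move=> hkp H.
pose O := [seq rcons z k | k <- iota 0 cz & k != kp].
have sizeO : size O = cz.-1.
  rewrite size_map size_filter.
  have := count_predC (pred1 kp) (iota 0 cz).
  rewrite count_uniq_mem ?iota_uniq // mem_iota add0n hkp size_iota => e.
  by rewrite -[in RHS]e add1n.
have O_in_s : size O <= count [in O] s.
  rewrite -size_filter; apply: uniq_leq_size.
    by rewrite map_inj_uniq ?filter_uniq ?iota_uniq //; apply: rcons_injr.
  move=> x hx; rewrite mem_filter hx /=.
  case/mapP: hx => k; rewrite mem_filter mem_iota add0n => /andP[hne hk] ->.
  exact: H.
have split_below w : sprefix (rcons z kp) w + (w \in O) <= sprefix z w.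
  case: (boolP (w \in O)) => [/mapP[k]|_]; last first.
    by rewrite addn0; case: (boolP (sprefix _ w)) => // /sprefix_rcons ->.
  move=> _ ->.
  have -> : sprefix (rcons z kp) (rcons z k) = false.
    by apply/negP => /andP[hp /(prefix_size_lt hp)]; rewrite !size_rcons ltnn.
  suff -> : sprefix z (rcons z k) by [].
  rewrite /sprefix prefix_rcons /=; apply/eqP => /(congr1 size).
  by rewrite size_rcons => /n_Sn.
rewrite -sizeO; apply: leq_trans (leq_add (leqnn _) O_in_s) _.
rewrite /below; elim: (s) => //= w t IH.
by rewrite addnACA; apply: leq_add.
Qed.

Section ConcentratedSum.
Local Open Scope ring_scope.
Variables (R : numDomainType) (L : seq nat) (P : pred nat) (w F : nat -> R).
Variables (k0 : nat) (X : R).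
Hypotheses (L_uniq : uniq L) (k0_in_L : k0 \in L) (X_ge0 : 0 <= X).
Hypotheses (w_ge0 : forall k, k \in L -> 0 <= w k) (F_off : forall k, k != k0 -> F k = 0).

Let sum_concentratedE :
  \sum_(k <- L | P k) w k * F k = if P k0 then w k0 * F k0 else 0.
Proof.
rewrite big_mkcond (bigD1_seq k0) //= big1 ?addr0 // => k hk.
by rewrite F_off // mulr0; case: ifP.
Qed.

Let rest := \sum_(k <- L | k != k0) (if P k then w k * X else 0).

Let rest_ge0 : 0 <= rest.
Proof.
rewrite /rest big_seq_cond; apply: sumr_ge0 => k /andP[hk _].
by case: ifP => // _; apply: mulr_ge0 => //; apply: w_ge0.
Qed.

Let sum_constE : \sum_(k <- L | P k) w k * X = (if P k0 then w k0 * X else 0) + rest.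
Proof. by rewrite big_mkcond (bigD1_seq k0). Qed.

Lemma ler_sum_concentrated : F k0 <= X ->
  \sum_(k <- L | P k) w k * F k <= \sum_(k <- L | P k) w k * X.
Proof.
move=> hF; rewrite sum_concentratedE sum_constE -[X in X <= _]addr0.
apply: lerD; last exact: rest_ge0.
by case: ifP => // _; apply: ler_wpM2l => //; apply: w_ge0.
Qed.

(* The excess [e * w k0 * X] of the jump to [k0] is paid by the jump to [k1]. *)
Lemma ler_sum_concentrated_transfer (e : R) (k1 : nat) :
  k1 \in L -> P k1 -> k1 != k0 -> e * w k0 <= w k1 -> F k0 <= (1 + e) * X ->
  \sum_(k <- L | P k) w k * F k <= \sum_(k <- L | P k) w k * X.
Proof.
move=> hk1 hP1 hne hw hF; rewrite sum_concentratedE sum_constE.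
case: ifP => _; last by rewrite add0r; apply: rest_ge0.
apply: le_trans (_ : _ <= w k0 * ((1 + e) * X)) _.
  by apply: ler_wpM2l => //; apply: w_ge0.
rewrite mulrDl mul1r mulrDr lerD2l /rest -big_filter.
rewrite (bigD1_seq k1) ?mem_filter ?hne ?filter_uniq //=.
rewrite hP1 mulrA -[X in X <= _]addr0; apply: lerD; first by rewrite (mulrC (w k0)) ler_wpM2r.
rewrite big_seq_cond; apply: sumr_ge0 => k /andP[+ _]; rewrite mem_filter => /andP[_ hk].
by case: ifP => // _; apply: mulr_ge0 => //; apply: w_ge0.
Qed.

End ConcentratedSum.

Definition collide (m : nat) (z p : seq nat) : bool :=
  [&& m <= size z, m <= size p & take m z == take m p].

Definition collision (m i j : nat) (s : state) : bool :=
  [&& i < j, j < size s & collide m (nth [::] s j) (nth [::] s i)].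

Lemma collide_prefix m x p : collide m x p -> size x <= m -> prefix x p.
Proof.
case/and3P=> h1 _ /eqP h3 h2; have hx : size x = m by apply/eqP; rewrite eqn_leq h1 h2.
by rewrite prefixE hx -h3 -hx take_size.
Qed.

Section Potential.
Local Open Scope ring_scope.
Variables (R : realType) (c : seq nat -> nat) (r : seq nat -> nat -> R) (n : nat)
  (pol : seq state -> R) (m : nat) (eps : R) (i j D : nat) (G : seq nat -> nat).
Hypothesis r_gt0 : forall w k, vertex c w -> (k < c w)%N -> 0 < r w k.
Hypothesis pol_prob : forall h, 0 <= pol h <= 1.
Hypothesis eps_gt0 : 0 < eps.
Hypothesis r_UE : forall w k k', vertex c w -> (k < c w)%N -> (k' < c w)%N ->
  eps * r w k' <= r w k.
Hypothesis i_lt_j : (i < j)%N.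
Hypothesis D_gt0 : (0 < D)%N.
Hypothesis D_lt_branching : forall z, vertex c z -> (1 < c z)%N -> (D < c z)%N.
Hypothesis G_child : forall z k, vertex c z -> (size z < m)%N -> (k < c z)%N ->
  (G z <= (1 < c z) + G (rcons z k))%N.
Hypothesis G_gen : forall w, vertex c w -> size w = m -> G w = 0%N.

Definition weight (a b : nat) : R := (1 + eps) ^+ a / (1 + eps) ^+ b.

Let q_ge1 : 1 <= 1 + eps.
Proof. by rewrite lerDl; apply: ltW. Qed.

Lemma weight_ge0 a b : 0 <= weight a b.
Proof. by rewrite divr_ge0 // exprn_ge0 // (le_trans ler01 q_ge1). Qed.

Lemma weight_le a b a' b' : (a + b' <= a' + b)%N -> weight a b <= weight a' b'.
Proof.
have q_pos k : 0 < (1 + eps) ^+ k by rewrite exprn_gt0 // (lt_le_trans ltr01 q_ge1).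
move=> h; rewrite ler_pdivrMr // mulrAC ler_pdivlMr // -!exprD.
exact: ler_weXn2l.
Qed.

Lemma weight_ge1 a : 1 <= weight a 0.
Proof. by rewrite /weight expr0 divr1 exprn_ege1. Qed.

Lemma weightS a b : (1 + eps) * weight a b = weight a.+1 b.
Proof. by rewrite /weight exprS mulrA. Qed.

Definition chasing (s : state) : bool :=
  prefix (nth [::] s j) (nth [::] s i) && (size (nth [::] s j) < m)%N.

(* While [j] chases [i] from [z], the factor [(1 + eps)^-1] per branch point
   left bounds the chance that [j] keeps to [i]'s path there; a branch point
   where all other children are occupied is paid for by [D] of the
   [below z s] particles ahead of [j]. *)
Definition potential (s : state) : R :=
  if (size s <= j)%N then weight (j %/ D) (G [::])
  else if collide m (nth [::] s j) (nth [::] s i) then 1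
  else if chasing s then weight (below (nth [::] s j) s %/ D) (G (nth [::] s j))
  else 0.

Lemma potential_ge0 s : 0 <= potential s.
Proof.
rewrite /potential; case: ifP => _; first exact: weight_ge0.
by case: ifP => _ //; case: ifP => _ //; apply: weight_ge0.
Qed.

Lemma potential_chasingE s : (j < size s)%N -> chasing s ->
  potential s = weight (below (nth [::] s j) s %/ D) (G (nth [::] s j)).
Proof.
move=> hj hC; rewrite /potential leqNgt hj hC /=; case/andP: hC => _ hm.
by rewrite /collide leqNgt hm.
Qed.

Lemma potential_not_chasing s s' : admissible c n s -> (j < size s)%N ->
  (size s <= size s')%N -> (forall b, prefix (nth [::] s b) (nth [::] s' b)) ->
  ~~ chasing s -> potential s' <= potential s.
Proof.
case=> _ _ _ ho hj hs hpre hC.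
have hj' : (j < size s')%N by apply: leq_trans hs.
have hpz : ~~ prefix (nth [::] s i) (nth [::] s j) by apply: ho; rewrite i_lt_j hj.
move: hC; rewrite /potential /chasing (leqNgt (size s) j) (leqNgt (size s') j) hj hj' /=.
move: (nth [::] s j) (nth [::] s i) (hpre j) (hpre i) hpz => z p hzz hpp hpz hC.
case hb: (collide m z p).
  case/and3P: hb => h1 h2 /eqP h3.
  have -> // : collide m (nth [::] s' j) (nth [::] s' i).
  apply/and3P; split; [exact: leq_trans h1 (size_prefix hzz)|
    exact: leq_trans h2 (size_prefix hpp)|].
  by rewrite (take_prefix hzz h1) (take_prefix hpp h2) h3.
have hzp : ~~ prefix z p.
  apply: contraFN hb => hzp; move: hC; rewrite hzp /= -leqNgt => hmz.
  apply/and3P; split => //; first exact: leq_trans hmz (size_prefix hzp).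
  by rewrite (take_prefix hzp hmz).
have no_common w : prefix z w -> prefix p w -> False.
  by move=> hzw hpw; have := prefix_total hzw hpw; rewrite (negbTE hzp) (negbTE hpz).
have -> : collide m (nth [::] s' j) (nth [::] s' i) = false.
  apply/negP => /and3P[h1 h2 /eqP h3].
  case: (leqP m (size z)) => hmz; last first.
    apply: (no_common _ _ hpp).
    by apply: prefix_trans (prefix_take_leq hzz (ltnW hmz)) _; rewrite h3 prefix_take.
  case: (leqP m (size p)) => hmp; last first.
    apply: (no_common _ hzz).
    by apply: prefix_trans (prefix_take_leq hpp (ltnW hmp)) _; rewrite -h3 prefix_take.
  move/negP: hb; apply; apply/and3P; split => //.
  by rewrite -(take_prefix hzz hmz) -(take_prefix hpp hmp) h3.
suff -> : prefix (nth [::] s' j) (nth [::] s' i) = false by rewrite (negbTE hC).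
by apply/negP => /(prefix_trans hzz)/no_common/(_ hpp).
Qed.

Lemma potential_chasing_le s s' : (j < size s)%N -> chasing s -> (j < size s')%N ->
  nth [::] s' j = nth [::] s j -> prefix (nth [::] s i) (nth [::] s' i) ->
  (below (nth [::] s j) s' <= below (nth [::] s j) s)%N -> potential s' <= potential s.
Proof.
move=> hj hC hj' ez hpp hb.
have hC' : chasing s'.
  by move: hC; rewrite /chasing ez => /andP[hzp ->]; rewrite (prefix_trans hzp hpp).
rewrite (potential_chasingE hj hC) (potential_chasingE hj' hC') ez.
by apply: weight_le; rewrite leq_add2r leq_div2r.
Qed.

Lemma potential_insert s : admissible c n s -> can_insert n s ->
  potential (rcons s [::]) <= potential s.
Proof.
move=> hI hins; have hi_lt k : (k < size s)%N -> nth [::] (rcons s [::]) k = nth [::] s k.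
  by move=> hk; rewrite nth_rcons hk.
case: (ltngtP (size s) j) => hsj.
- by rewrite /potential size_rcons hsj (ltnW hsj).
- have hs : (size s <= size (rcons s [::]))%N by rewrite size_rcons.
  have hj' : (j < size (rcons s [::]))%N by rewrite size_rcons ltnW.
  have [hC|hC] := boolP (chasing s).
    apply: potential_chasing_le; rewrite ?hi_lt ?below_insert ?prefix_refl //.
    exact: ltn_trans i_lt_j hsj.
  apply: potential_not_chasing => // b; rewrite nth_rcons.
  by case: ltnP => hb; [apply: prefix_refl | rewrite nth_default // prefix0s].
rewrite /potential !nth_rcons size_rcons hsj leqnn ltnn eqxx i_lt_j.
case: ifP => [/and3P[] | _].
  by rewrite leqn0 => /eqP hm0 _ _; rewrite G_gen ?weight_ge1 // hm0.
case: ifP => _; last exact: weight_ge0.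
apply: weight_le; rewrite leq_add2r leq_div2r // below_insert -hsj.
exact: count_size.
Qed.

Definition toward (s : state) : nat := nth 0 (nth [::] s i) (size (nth [::] s j)).

Section Chasing.
Variable s : state.
Hypotheses (s_adm : admissible c n s) (j_lt_s : (j < size s)%N) (s_chasing : chasing s).

Let i_lt_s : (i < size s)%N. Proof. exact: ltn_trans i_lt_j j_lt_s. Qed.

Lemma chasing_size_lt : (size (nth [::] s j) < size (nth [::] s i))%N.
Proof.
case/andP: s_chasing => hzp _; apply: prefix_size_lt hzp _.
case: s_adm => _ _ _ ho; apply: contraNneq (ho i j _) => [<-|]; first exact: prefix_refl.
by rewrite i_lt_j j_lt_s.
Qed.

Lemma prefix_toward : prefix (rcons (nth [::] s j) (toward s)) (nth [::] s i).
Proof. by case/andP: s_chasing => hzp _; rewrite (prefix_rcons_nth 0) ?chasing_size_lt. Qed.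

Lemma toward_lt : (toward s < c (nth [::] s j))%N.
Proof.
have := vertexP _ _ (vertex_nth s_adm i_lt_s) _ chasing_size_lt.
by case/andP: s_chasing; rewrite prefixE => /eqP ->.
Qed.

Let nth_jump_j k : nth [::] (jump s j k) j = rcons (nth [::] s j) k.
Proof. by rewrite nth_jump eqxx. Qed.

Let nth_jump_i k : nth [::] (jump s j k) i = nth [::] s i.
Proof. by rewrite nth_jump ltn_eqF. Qed.

Let size_jump_gt k : (size (jump s j k) <= j)%N = false.
Proof. by rewrite size_jump // leqNgt j_lt_s. Qed.

Lemma potential_jump_away k : k != toward s -> potential (jump s j k) = 0.
Proof.
move=> hk; rewrite /potential /chasing size_jump_gt nth_jump_j nth_jump_i.
case/andP: (s_chasing) => hzp hm.
have -> : prefix (rcons (nth [::] s j) k) (nth [::] s i) = false.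
  by rewrite (prefix_rcons_nth 0) ?chasing_size_lt // (negbTE hk).
case: ifP => // /collide_prefix; rewrite size_rcons => /(_ hm).
by rewrite (prefix_rcons_nth 0) ?chasing_size_lt // (negbTE hk).
Qed.

Local Notation z := (nth [::] s j).
Local Notation kp := (toward s).

Lemma potential_jump_toward :
  potential (jump s j kp) <= weight (below (rcons z kp) s %/ D) (G (rcons z kp)).
Proof.
rewrite /potential /chasing size_jump_gt nth_jump_j nth_jump_i prefix_toward.
case/andP: (s_chasing) => _ hm.
case: ifP => [/and3P[h1 _ _] | _].
  rewrite G_gen ?weight_ge1 //; first by rewrite vertex_rcons (vertex_nth s_adm j_lt_s) toward_lt.
  by apply/eqP; rewrite eqn_leq h1 size_rcons hm.
case: ifP => _ /=; last exact: weight_ge0.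
apply: weight_le; rewrite leq_add2r leq_div2r // below_jump //.
by case/andP => _; rewrite eqxx.
Qed.

Let G_toward : (G z <= (1 < c z) + G (rcons z kp))%N.
Proof.
case/andP: s_chasing => _ hm.
by apply: G_child; rewrite ?(vertex_nth s_adm j_lt_s) ?toward_lt.
Qed.

Lemma potential_jump_toward_le : potential (jump s j kp) <= (1 + eps) * potential s.
Proof.
rewrite (potential_chasingE j_lt_s s_chasing) weightS.
apply: le_trans potential_jump_toward (weight_le _).
have := leq_div2r D (below_rcons z kp s); have := G_toward.
by case: (1 < c z)%N => /=; lia.
Qed.

Lemma potential_jump_toward_blocked :
  (forall k, (k < c z)%N -> k != kp -> rcons z k \in s) ->
  potential (jump s j kp) <= potential s.
Proof.
move=> hblocked; rewrite (potential_chasingE j_lt_s s_chasing).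
apply: le_trans potential_jump_toward (weight_le _).
have hsib := below_siblings toward_lt hblocked.
have := G_toward; case: (ltnP 1 (c z)) => hc /=; last first.
  by rewrite add0n => hG; apply: leq_add; [apply/leq_div2r/below_rcons|].
have hD := D_lt_branching (vertex_nth s_adm j_lt_s) hc.
have hdiv : (below (rcons z kp) s %/ D + 1 <= below z s %/ D)%N.
  rewrite -(divnDMl _ _ D_gt0) mul1n leq_div2r //.
  by apply: leq_trans hsib; rewrite leq_add2l -ltnS prednK // (ltn_trans _ hc).
lia.
Qed.

Lemma potential_jump_chaser_sum :
  \sum_(k <- iota 0 (c z) | rcons z k \notin s) r z k * potential (jump s j k) <=
  \sum_(k <- iota 0 (c z) | rcons z k \notin s) r z k * potential s.
Proof.
have hr k : k \in iota 0 (c z) -> 0 <= r z k.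
  by rewrite mem_iota => /andP[_ hk]; apply/ltW/r_gt0; rewrite ?(vertex_nth s_adm j_lt_s).
have hkp : kp \in iota 0 (c z) by rewrite mem_iota toward_lt.
have [/hasP[k' hk' /andP[hne hfree]]|/hasPn hblocked] :=
  boolP (has (fun k => (k != kp) && (rcons z k \notin s)) (iota 0 (c z))).
  apply: (ler_sum_concentrated_transfer (iota_uniq _ _) hkp (potential_ge0 s) hr
    potential_jump_away hk' hfree hne _ potential_jump_toward_le).
  apply: r_UE; rewrite ?(vertex_nth s_adm j_lt_s) ?toward_lt //.
  by move: hk'; rewrite mem_iota.
apply: (ler_sum_concentrated _ (iota_uniq _ _) hkp (potential_ge0 s) hr potential_jump_away).
apply: potential_jump_toward_blocked => k hk hne.
by have := hblocked k; rewrite mem_iota hk hne negbK => ->.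
Qed.

End Chasing.

Lemma potential_jump_sum s a : admissible c n s -> (a < size s)%N ->
  \sum_(k <- iota 0 (c (nth [::] s a)) | rcons (nth [::] s a) k \notin s)
     r (nth [::] s a) k * potential (jump s a k) <=
  \sum_(k <- iota 0 (c (nth [::] s a)) | rcons (nth [::] s a) k \notin s)
     r (nth [::] s a) k * potential s.
Proof.
move=> hI ha; have [/andP[/eqP eaj hC]|hnot] := boolP ((a == j) && chasing s).
  by move: ha; rewrite eaj => hj; apply: potential_jump_chaser_sum.
apply: ler_sum_seq => k hk hfree; apply: ler_wpM2l.
  by move: hk; rewrite mem_iota => /andP[_ hk]; apply/ltW/r_gt0; rewrite ?(vertex_nth hI ha).
have [hsj|hjs] := leqP (size s) j; first by rewrite /potential size_jump // hsj.
have [hC|hC] := boolP (chasing s); last first.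
  by apply: potential_not_chasing; rewrite ?size_jump // => b; apply: prefix_nth_jump.
have haj : j != a by move: hnot; rewrite hC andbT eq_sym.
apply: potential_chasing_le => //;
  [by rewrite size_jump | by rewrite nth_jump (negbTE haj) | exact: prefix_nth_jump |].
apply: below_jump => // /andP[/prefix_rcons_inv /orP[hp|/eqP e] _].
  rewrite /sprefix hp /=; case: hI => _ _ hu _.
  by rewrite (nth_uniq [::] hjs ha hu).
by move: hfree; rewrite -e mem_nth.
Qed.

Lemma potential_excessive h : admissible c n (last [::] h) ->
  \sum_(e <- succs c r n pol h) e.1 * potential e.2 <= potential (last [::] h).
Proof.
move=> hI; rewrite sum_succsE; set s := last [::] h; set p := insert_prob _ _ h.
have /andP[p_ge0 p_le1] : 0 <= p <= 1 by apply: insert_prob_ge0_le1.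
have hins : p * potential (rcons s [::]) <= p * potential s.
  have [->|hp] := eqVneq p 0; first by rewrite !mul0r.
  by apply: ler_wpM2l => //; apply: potential_insert => //; apply: insert_prob_can_insert hp.
have hjump : jump_sum c r potential s <= jump_sum c r (fun=> 1) s * potential s.
  rewrite /jump_sum mulr_suml; apply: ler_sum_seq => a; rewrite mem_iota => /andP[_ ha] _.
  rewrite mulr_suml; under [X in _ <= X]eq_bigr do rewrite mulr1.
  exact: potential_jump_sum.
have hs : p * potential s + (1 - p) * potential s = potential s.
  by rewrite -mulrDl addrC subrK mul1r.
case: ifP => hl; first by rewrite -[X in _ <= X]hs lerD2r.
rewrite -[X in _ <= X]hs; apply: lerD => //.
have hw : 0 <= (1 - p) / jump_sum c r (fun=> 1) s.
  by apply: divr_ge0; [rewrite subr_ge0 | apply: jump_sum_ge0 hI].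
apply: le_trans (ler_wpM2l hw hjump) _.
by rewrite mulrA divfK ?hl.
Qed.

Lemma collision_prob_le N :
  prob c r n pol N [:: [::]] (collision m i j) <= weight (j %/ D) (G [::]).
Proof.
apply: (prob_le_excessive r_gt0 pol_prob (Phi := potential)) => //.
- move=> s _; rewrite /collision i_lt_j /=.
  case: (boolP (_ && _)) => [/andP[hj hb]|_]; last exact: potential_ge0.
  by rewrite /potential leqNgt hj hb.
- exact: potential_excessive.
exact: admissible_nil.
Qed.

End Potential.

Section BranchPoints.
Variables (c : seq nat -> nat) (m : nat).

Definition branchings (z x : seq nat) : nat :=
  count (fun t => 1 < c (take t x)) (iota (size z) (m - size z)).

Definition min_branchings (z : seq nat) : nat :=
  \big[minn/m]_(x <- gen c m | prefix z x) branchings z x.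

Lemma min_branchings_child z k : vertex c z -> size z < m -> k < c z ->
  min_branchings z <= (1 < c z) + min_branchings (rcons z k).
Proof.
move=> hv hm hk; rewrite -leq_subLR {2}/min_branchings big_seq_cond -minEnat -leEnat.
apply: le_bigmin => [|x /andP[hx hzkx]].
  rewrite leEnat; apply: leq_trans (leq_subr _ _) _.
  by rewrite /min_branchings -minEnat -leEnat; apply: bigmin_le_id.
have hzx : prefix z x := prefix_trans (prefix_rcons z k) hzkx.
rewrite leEnat leq_subLR /min_branchings -minEnat -leEnat.
apply: le_trans (ge_bigmin_seq _ _ _ _ hx hzx) _.
rewrite leEnat /branchings size_rcons -(subnSK hm) /=.
by move: hzx; rewrite prefixE => /eqP ->.
Qed.

Lemma min_branchings_gen w : vertex c w -> size w = m -> min_branchings w = 0.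
Proof.
move=> hv hs; apply/eqP; rewrite -leqn0 /min_branchings -minEnat -leEnat.
have hw : w \in gen c m by rewrite -hs; apply: mem_gen.
by apply: le_trans (ge_bigmin_seq _ _ _ _ hw (prefix_refl w)) _; rewrite /branchings hs subnn.
Qed.

Lemma minF_le_min_branchings : minF c m <= min_branchings [::].
Proof.
rewrite /minF /min_branchings [X in _ <= X]big_seq_cond -minEnat -leEnat.
apply: le_bigmin => [|x /andP[hx _]].
  apply: le_trans (bigmin_le_id _ _ _ _) _; rewrite leEnat.
  case E: (gen c m) => [|x L] //=; have hx : x \in gen c m by rewrite E mem_head.
  by rewrite -(gen_size hx); apply: leq_trans (count_size _ _) _; rewrite size_iota.
apply: le_trans (ge_bigmin_seq _ _ _ _ hx isT) _.
rewrite leEnat /Fox /branchings /= subn0 (gen_size hx).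
by apply: sub_count => t /=; rewrite /deg; case: (c (take t x)) => [|[|k]] //=; case: (_ != _).
Qed.

End BranchPoints.

Section Collisions.
Local Open Scope ring_scope.
Variables (R : realType) (c : seq nat -> nat) (r : seq nat -> nat -> R) (eps : R)
  (d n m : nat) (pol : seq state -> R).
Hypothesis c_gt0 : forall w, vertex c w -> (0 < c w)%N.
Hypothesis d_min : min_children c d.
Hypothesis r_gt0 : forall w k, vertex c w -> (k < c w)%N -> 0 < r w k.
Hypothesis eps_gt0 : 0 < eps.
Hypothesis r_UE : forall w k k', vertex c w -> (k < c w)%N -> (k' < c w)%N ->
  eps * r w k' <= r w k.
Hypothesis pol_prob : forall h, 0 <= pol h <= 1.

Lemma inv_pow_weight (a b : nat) : (1 / (1 + eps)) ^ (Posz a - Posz b) = weight eps b a.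
Proof.
have q_neq0 : 1 + eps != 0 by rewrite gt_eqF // addr_gt0.
by rewrite div1r exprz_inv opprB expfzDr // -exprnN.
Qed.

Lemma collision_prob_le_Fn i j N : (i < j < n)%N ->
  prob c r n pol N [:: [::]] (collision m i j) <= (1 / (1 + eps)) ^ Fn c d n m.
Proof.
case/andP=> i_lt_j j_lt_n; case: d_min => [[w0 [w0_vertex w0_d]] d_le].
have d_gt0 : (0 < d)%N by rewrite -w0_d c_gt0.
rewrite /Fn; case: eqP => [d1|/eqP d_neq1]; rewrite inv_pow_weight.
  apply: le_trans (collision_prob_le n r_gt0 pol_prob eps_gt0 r_UE i_lt_j
    (ltn0Sn 0) (fun z _ hz => hz) (@min_branchings_child c m) (@min_branchings_gen c m) N) _.
  apply: weight_le => //; rewrite divn1 leq_add ?(ltnW j_lt_n) //.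
  exact: minF_le_min_branchings.
have d_gt1 : (1 < d)%N by rewrite ltn_neqAle eq_sym d_neq1.
have G_child z k : vertex c z -> (size z < m)%N -> (k < c z)%N ->
    (m - size z <= (1 < c z) + (m - size (rcons z k)))%N.
  by move=> /d_le hz _ _; rewrite size_rcons (leq_trans d_gt1 hz); lia.
apply: le_trans (@collision_prob_le _ _ _ n _ m eps i j d.-1 (fun z => m - size z)%N
    r_gt0 pol_prob eps_gt0 r_UE i_lt_j _ _ G_child _ N) _.
- by rewrite -ltnS prednK.
- by move=> z hz _; rewrite prednK // d_le.
- by move=> w _ ->; rewrite subnn.
apply: weight_le => //; rewrite subn0 leq_add2r /ceil_div leq_div2r //.
exact: leq_trans (ltnW j_lt_n) (leq_addr _ _).
Qed.

End Collisions.

Lemma not_distinct_collision m s : ~~ distinct_at m s -> exists i j, collision m i j s.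
Proof.
rewrite /distinct_at => /allPn[a ha] /allPn[b hb].
rewrite !negb_imply => /and5P[hab hma hmb heq _].
move: ha hb; rewrite !mem_iota !add0n => /andP[_ ha] /andP[_ hb].
case: (ltngtP a b) => h; last by rewrite h eqxx in hab.
- by exists a, b; rewrite /collision /collide h hb hma hmb /= eq_sym.
- by exists b, a; rewrite /collision /collide h ha hma hmb.
Qed.

Lemma not_distinct_le_collisions (R : numDomainType) n m s : size s <= n ->
  (1 - (distinct_at m s)%:R <= \sum_(ij : 'I_n * 'I_n) (collision m ij.1 ij.2 s)%:R :> R)%R.
Proof.
move=> s_le_n; have [_|/not_distinct_collision [i [j hij]]] := boolP (distinct_at m s).
  by rewrite subrr; apply: sumr_ge0 => ij _; apply: ler0n.
have /and3P[i_lt_j j_lt_s _] := hij.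
have j_lt_n : j < n by apply: leq_trans s_le_n.
have i_lt_n : i < n by apply: ltn_trans j_lt_n.
rewrite subr0 (bigD1 (Ordinal i_lt_n, Ordinal j_lt_n)) //= hij lerDl.
by apply: sumr_ge0 => ij _; apply: ler0n.
Qed.

Local Open Scope ring_scope.

Theorem mainTheorem9 (R : realType) (c : seq nat -> nat)
  (r : seq nat -> nat -> R) (eps : R) (d n m : nat)
  (pol : seq (seq (seq nat)) -> R) :
  (* every vertex has at least one child (so T is infinite, d_T >= 1) *)
  (forall w, vertex c w -> (0 < c w)%N) ->
  min_children c d ->
  (* positive, uniformly bounded rates *)
  (forall w k, vertex c w -> (k < c w)%N -> 0 < r w k) ->
  (exists M : R, forall w k, vertex c w -> (k < c w)%N -> r w k <= M) ->
  (* (UE) *)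
  0 < eps -> eps <= 1 ->
  (forall w k k', vertex c w -> (k < c w)%N -> (k' < c w)%N ->
     eps * r w k' <= r w k) ->
  (* arbitrary insertion rule *)
  (forall h, 0 <= pol h <= 1) ->
  forall N : nat,
    1 - (n ^ 2)%:R * (1 / (1 + eps)) ^ (Fn c d n m)
      <= prob c r n pol N [:: [::]] (distinct_at m).
Proof.
move=> c_gt0 d_min r_gt0 _ eps_gt0 _ r_UE pol_prob N.
set bound := (1 / (1 + eps)) ^ Fn c d n m.
have union := prob_union_bound r_gt0 pol_prob
  (B := fun ij : 'I_n * 'I_n => collision m ij.1 ij.2)
  (fun s '(And4 s_le_n _ _ _) => not_distinct_le_collisions _ _ s_le_n)
  N (h := [:: [::]]) (admissible_nil c n).
have pair_bound (ij : 'I_n * 'I_n) : prob c r n pol N [:: [::]] (collision m ij.1 ij.2) <= bound.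
  have [ij_lt|ij_ge] := ltnP ij.1 ij.2.
    by apply: collision_prob_le_Fn; rewrite ?ij_lt ?ltn_ord.
  rewrite prob_pred0 => [|s]; last by rewrite /collision ltnNge ij_ge.
  by apply: exprz_ge0; rewrite divr_ge0 // addr_ge0 // (ltW eps_gt0).
rewrite lerBlDr addrC -lerBlDr; apply: le_trans union _.
apply: le_trans (ler_sum _ (fun ij _ => pair_bound ij)) _.
by rewrite sumr_const card_prod card_ord mulnn mulr_natl.
Qed.
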